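(* Let $\lambda>0$. There is a constant $C$ depending only on $\lambda$ such that for all $b\in(-1,1)$, $$\int_{-1}^1(1-bs)^{-\lambda-1}(1-s)(1-s^2)^{\lambda-1}ds\le\frac{C}{1-|b|}.$$ *)

From HB Require Import structures.
From mathcomp Require Import all_boot all_order all_algebra.
From mathcomp Require Import all_classical all_reals all_analysis.

From HB Require Import structures.
From mathcomp Require Import all_boot all_order all_algebra.
From mathcomp Require Import all_classical all_reals all_analysis.
From mathcomp Require Import measurable_realfun ring lra.
Import Order.TTheory GRing.Theory Num.Theory.
Import numFieldNormedType.Exports.
Local Open Scope classical_set_scope.
Local Open Scope ring_scope.

(* Split the integral at 0.  On [-1, 0] the factor (1 - s)^lam is at most 2^lam, and on
   [0, 1] so is (1 - s) (1 + s)^(lam - 1) <= (1 + s)^lam.  What remains is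
   w(s) = (1 + p s)^(lam - 1) (1 - b s)^(-lam - 1) with p = 1, resp. p = -1, which has the
   primitive ((1 + p s) / (1 - b s))^lam / (lam (p + b)).  It vanishes at the endpoint -p
   and equals 1 / (lam (p + b)) at 0, so the two halves contribute at most
   2^lam / (lam (1 + b)) and 2^lam / (lam (1 - b)), and 1/(1 + b) + 1/(1 - b) <= 2/(1 - |b|).
   As w blows up at -p when lam < 1, the fundamental theorem of calculus is only used on
   compact subintervals of ]-1, 1[, and monotone convergence carries the bound to [-1, 1]. *)

Section exhaustion.
Context {R : realType}.
Variables (a m b : R).
Hypotheses (am : a < m) (mb : m < b).

Definition inner_left (n : nat) := a + (m - a) / n.+2%:R.
Definition inner_right (n : nat) := b - (b - m) / n.+2%:R.
Definition inner_itv (n : nat) := `[inner_left n, inner_right n]%classic.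

Lemma inner_itv_bounds n : a < inner_left n < m /\ m < inner_right n < b.
Proof.
rewrite /inner_left /inner_right.
have shrink (t : R) : 0 < t -> 0 < t / n.+2%:R < t.
  move=> t0; rewrite divr_gt0 ?ltr0n //= ltr_pdivrMr ?ltr0n // ltr_pMr //.
  by rewrite ltr1n.
have := shrink (m - a); have := shrink (b - m).
set e1 := (m - a) / _; set e2 := (b - m) / _.
by rewrite !subr_gt0 => /(_ mb) /andP[? ?] /(_ am) /andP[? ?]; split; apply/andP; split; lra.
Qed.

Lemma inner_itv_monotone n :
  inner_left n.+1 <= inner_left n /\ inner_right n <= inner_right n.+1.
Proof.
have le_div (t : R) : 0 <= t -> t / n.+3%:R <= t / n.+2%:R.
  by move=> t0; rewrite ler_wpM2l // lef_pV2 ?posrE ?ltr0n // ler_nat.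
rewrite /inner_left /inner_right lerD2l lerD2l lerN2.
by split; apply: le_div; rewrite subr_ge0 ltW.
Qed.

Lemma nondecreasing_inner_itv : nondecreasing_seq inner_itv.
Proof.
apply/nondecreasing_seqP => n; rewrite subsetEset => x.
rewrite /inner_itv /= !in_itv /= => /andP[? ?].
by have [? ?] := inner_itv_monotone n; apply/andP; split; lra.
Qed.

Lemma bigcup_inner_itv : \bigcup_n inner_itv n = `]a, b[%classic.
Proof.
apply/seteqP; split => [x [n _]|x].
  have [/andP[? ?] /andP[? ?]] := inner_itv_bounds n.
  by rewrite /inner_itv /= !in_itv /= => /andP[? ?]; apply/andP; split; lra.
rewrite /= in_itv /= => /andP[ax xb].
pose M := Num.max ((m - a) / (x - a)) ((b - m) / (b - x)).
have M_lt : M < (Num.truncn M).+2%:R by rewrite (lt_le_trans (truncnS_gt M)) // ler_nat.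
have shrink (t y : R) : 0 < y -> t / y <= M -> t / (Num.truncn M).+2%:R <= y.
  move=> y0 tyM; rewrite ler_pdivrMr ?ltr0n // mulrC -ler_pdivrMr //.
  exact/ltW/(le_lt_trans tyM).
exists (Num.truncn M) => //; rewrite /inner_itv /inner_left /inner_right /= in_itv /=.
have := shrink (m - a) (x - a); have := shrink (b - m) (b - x).
rewrite !subr_gt0 /M !le_max !lexx orbT => /(_ xb isT) + /(_ ax isT).
set e1 := (m - a) / _; set e2 := (b - m) / _.
by move=> ? ?; apply/andP; split; lra.
Qed.

Lemma ge0_integral_itv_le_inner (f : R -> R) (K : \bar R) :
  measurable_fun `]a, b[ f -> {in `]a, b[, forall x, 0 <= f x} ->
  (forall c d, a < c < m -> m < d < b ->
    (\int[lebesgue_measure]_(x in `[c, d]) (f x)%:E <= K)%E) ->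
  (\int[lebesgue_measure]_(x in `[a, b]) (f x)%:E <= K)%E.
Proof.
move=> mf f0 fK.
have sub_ab n : inner_itv n `<=` `]a, b[%classic.
  by rewrite -bigcup_inner_itv; exact: bigcup_sup.
rewrite integral_itv_bndoo; last exact/measurable_EFinP.
rewrite -bigcup_inner_itv.
apply: cvge_to_le (@ge0_nondecreasing_set_cvg_integral _ (measurableTypeR R) R
  inner_itv (fun x => (f x)%:E) lebesgue_measure nondecreasing_inner_itv _ _ _) _.
- by move=> n; exact: measurable_itv.
- move=> n; apply/measurable_EFinP.
  exact: measurable_funS (sub_ab n) mf.
- by move=> n x /sub_ab xab; rewrite lee_fin f0.
- by apply: nearW => n; have [? ?] := inner_itv_bounds n; exact: fK.
Qed.

End exhaustion.

Section derivative_complements.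
Context {R : realType}.

Lemma derivable_oo_LRcontinuous_cc (f : R -> R) (c d : R) : c <= d ->
  {in `[c, d], forall x, derivable f x 1} -> derivable_oo_LRcontinuous f c d.
Proof.
move=> cd df; have cont x : x \in `[c, d] -> {for x, continuous f}.
  by move=> /df /derivable1_diffP; exact: differentiable_continuous.
split.
- by move=> x /subset_itv_oo_cc /df.
- by apply/cvg_at_right_filter/cont; rewrite in_itv /= lexx cd.
- by apply/cvg_at_left_filter/cont; rewrite in_itv /= lexx cd.
Qed.

Lemma gt0_mulr_powRB1 (x r : R) : 0 < x -> x * x `^ (r - 1) = x `^ r.
Proof.
move=> x0; rewrite powRB; last by rewrite (gt_eqF x0) implybT.
by rewrite powRr1 ?ltW // mulrC divfK // gt_eqF.
Qed.

Lemma is_derive_powR_comp (r : R) (u : R -> R) (x du : R) :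
  is_derive x 1 u du -> 0 < u x ->
  is_derive x 1 (fun y => u y `^ r) (r * u x `^ (r - 1) * du).
Proof. by move=> ud ux0; exact: (is_derive1_comp (is_derive1_powR r ux0) ud). Qed.

End derivative_complements.
Arguments is_derive_powR_comp {R} r {u x du}.

Section beta_primitive.
Context {R : realType}.
Variables (lam p q : R).

Definition beta_weight (x : R) := (1 + p * x) `^ (lam - 1) * (1 - q * x) `^ (- lam - 1).

(* The derivative of (1 + p x) / (1 - q x) is (p + q) / (1 - q x)^2. *)
Definition beta_primitive (x : R) :=
  (1 + p * x) `^ lam * (1 - q * x) `^ (- lam) / (lam * (p + q)).

Let is_derive_1Dp (x : R) : is_derive x 1 (fun y => 1 + p * y) p.
Proof. by apply: is_derive_eq; rewrite add0r mul1r /GRing.scale /= mulr1. Qed.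

Let is_derive_1Bq (x : R) : is_derive x 1 (fun y => 1 - q * y) (- q).
Proof. by apply: is_derive_eq; rewrite add0r mul1r /GRing.scale /= mulr1. Qed.

Lemma derivable_beta_weight x : 0 < 1 + p * x -> 0 < 1 - q * x ->
  derivable beta_weight x 1.
Proof.
move=> ux vx; apply: ex_derive; apply: is_deriveM.
- exact: is_derive_powR_comp (is_derive_1Dp x) ux.
- exact: is_derive_powR_comp (is_derive_1Bq x) vx.
Qed.

Lemma is_derive_beta_primitive x : lam != 0 -> p + q != 0 ->
  0 < 1 + p * x -> 0 < 1 - q * x -> is_derive x 1 beta_primitive (beta_weight x).
Proof.
move=> lam0 pq0 ux vx.
have := is_derive_powR_comp lam (is_derive_1Dp x) ux.
have := is_derive_powR_comp (- lam) (is_derive_1Bq x) vx.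
move=> du dv; rewrite /beta_primitive; apply: is_derive_eq.
rewrite scaler0 add0r /beta_weight /GRing.scale /=.
rewrite -[(1 + p * x) `^ lam]gt0_mulr_powRB1 // -[(1 - q * x) `^ (- lam)]gt0_mulr_powRB1 //.
by field; rewrite lam0 pq0.
Qed.

Lemma measurable_beta_weight : measurable_fun setT beta_weight.
Proof.
apply: measurable_funM; apply: (measurableT_comp (measurable_powR _)).
- by apply: measurable_funD => //; exact: measurable_funM.
- by apply: measurable_funB => //; exact: measurable_funM.
Qed.

Lemma integral_beta_weight c d : lam != 0 -> p + q != 0 -> c < d ->
  {in `[c, d], forall x, 0 < 1 + p * x} -> {in `[c, d], forall x, 0 < 1 - q * x} ->
  (\int[lebesgue_measure]_(x in `[c, d]) (beta_weight x)%:E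
    = (beta_primitive d - beta_primitive c)%:E)%E.
Proof.
move=> lam0 pq0 cd up vq.
have dH x : x \in `[c, d] -> is_derive x 1 beta_primitive (beta_weight x).
  by move=> xcd; apply: is_derive_beta_primitive; [| |exact: up|exact: vq].
rewrite EFinB; apply: continuous_FTC2 => //.
- apply: derivable_within_continuous => x xcd.
  by apply: derivable_beta_weight; [exact: up|exact: vq].
- by apply: derivable_oo_LRcontinuous_cc (ltW cd) _ => x /dH [].
- by move=> x /subset_itv_oo_cc /dH dHx; rewrite derive1E derive_val.
Qed.

Lemma beta_primitive0 : beta_primitive 0 = (lam * (p + q))^-1.
Proof. by rewrite /beta_primitive !mulr0 addr0 subr0 !powR1 mulr1 mul1r. Qed.

Lemma beta_primitive_ge0 x : 0 < lam * (p + q) -> 0 <= beta_primitive x.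
Proof. by move=> k0; apply: divr_ge0; [rewrite mulr_ge0 ?powR_ge0 | exact: ltW]. Qed.

Lemma beta_primitive_le0 x : lam * (p + q) < 0 -> beta_primitive x <= 0.
Proof. by move=> k0; rewrite mulr_ge0_le0 ?mulr_ge0 ?powR_ge0 // invr_le0 ltW. Qed.

End beta_primitive.

Section kernel.
Context {R : realType}.
Variables (lam b : R).
Hypotheses (lam_gt0 : 0 < lam) (hb : -1 < b < 1).

Definition kernel (s : R) := (1 - b * s) `^ (- lam - 1) * (1 - s) * (1 - s ^+ 2) `^ (lam - 1).

Lemma kernel_ge0 s : s <= 1 -> 0 <= kernel s.
Proof. by move=> s1; rewrite !mulr_ge0 ?powR_ge0 // subr_ge0. Qed.

Lemma measurable_kernel : measurable_fun setT kernel.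
Proof.
apply: measurable_funM; first apply: measurable_funM.
- apply: (measurableT_comp (measurable_powR _)).
  by apply: measurable_funB => //; exact: measurable_funM.
- exact: measurable_funB.
- apply: (measurableT_comp (measurable_powR _)).
  by apply: measurable_funB => //; exact: measurable_funX.
Qed.

Let powR_1Bsqr s : -1 <= s <= 1 ->
  (1 - s ^+ 2) `^ (lam - 1) = (1 + s) `^ (lam - 1) * (1 - s) `^ (lam - 1).
Proof.
move=> /andP[s1 s2]; rewrite -powRM; first by congr (_ `^ _); ring.
all: lra.
Qed.

Lemma kernel_le_left s : -1 <= s <= 0 -> kernel s <= 2 `^ lam * beta_weight lam 1 b s.
Proof.
move=> /andP[s1 s0]; have sB : 0 <= 1 - s by lra.
rewrite /kernel /beta_weight mul1r powR_1Bsqr; last by apply/andP; split; lra.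
rewrite [leLHS](_ : _ = (1 - s) * (1 - s) `^ (lam - 1) *
  ((1 + s) `^ (lam - 1) * (1 - b * s) `^ (- lam - 1))); last by ring.
rewrite mulr_powRB1 // ler_wpM2r ?mulr_ge0 ?powR_ge0 //.
by apply: ge0_ler_powR; rewrite ?nnegrE ?(ltW lam_gt0) //; lra.
Qed.

Lemma kernel_le_right s : 0 <= s <= 1 -> kernel s <= 2 `^ lam * beta_weight lam (-1) b s.
Proof.
move=> /andP[s0 s1]; have sD : 0 <= 1 + s by lra.
rewrite /kernel /beta_weight mulN1r powR_1Bsqr; last by apply/andP; split; lra.
rewrite [leLHS](_ : _ = (1 - s) * (1 + s) `^ (lam - 1) *
  ((1 - s) `^ (lam - 1) * (1 - b * s) `^ (- lam - 1))); last by ring.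
rewrite ler_wpM2r ?mulr_ge0 ?powR_ge0 //.
rewrite (@le_trans _ _ ((1 + s) * (1 + s) `^ (lam - 1))) ?ler_wpM2r ?powR_ge0 //; first lra.
by rewrite mulr_powRB1 //; apply: ge0_ler_powR; rewrite ?nnegrE ?(ltW lam_gt0) //; lra.
Qed.

Lemma onem_mul_gt0 x : -1 < x < 1 -> 0 < 1 - b * x.
Proof.
move=> /andP[x1 x2]; have /andP[b1 b2] := hb.
have : 0 < (1 - b) * (1 + x) by apply: mulr_gt0; lra.
have : 0 < (1 + b) * (1 - x) by apply: mulr_gt0; lra.
lra.
Qed.

Lemma integral_kernel_le_primitive p c d : p + b != 0 -> c < d -> -1 < c -> d < 1 ->
  {in `[c, d], forall x, 0 < 1 + p * x} ->
  {in `[c, d], forall x, kernel x <= 2 `^ lam * beta_weight lam p b x} ->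
  (\int[lebesgue_measure]_(x in `[c, d]) (kernel x)%:E
    <= (2 `^ lam * (beta_primitive lam p b d - beta_primitive lam p b c))%:E)%E.
Proof.
move=> pb0 cd c1 d1 up kw.
have vb : {in `[c, d], forall x, 0 < 1 - b * x}.
  by move=> x; rewrite in_itv /= => /andP[? ?]; apply: onem_mul_gt0; apply/andP; split; lra.
apply: (@le_trans _ _ (\int[lebesgue_measure]_(x in `[c, d]) (2 `^ lam * beta_weight lam p b x)%:E)%E).
  apply: ge0_le_integral => //.
  - by move=> x; rewrite /= in_itv /= => /andP[_ ?]; rewrite lee_fin kernel_ge0 //; lra.
  - by apply/measurable_EFinP; apply: measurable_funTS; exact: measurable_kernel.
  - by apply/measurable_EFinP/measurable_funTS/measurable_funM => //; exact: measurable_beta_weight.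
under eq_integral do rewrite EFinM.
rewrite ge0_integralZl_EFin ?powR_ge0 //.
- by rewrite integral_beta_weight ?(lt0r_neq0 lam_gt0) // EFinM.
- by move=> x _; rewrite lee_fin mulr_ge0 ?powR_ge0.
- by apply/measurable_EFinP; apply: measurable_funTS; exact: measurable_beta_weight.
Qed.

Lemma integral_kernel_left c : -1 < c < 0 ->
  (\int[lebesgue_measure]_(x in `[c, 0%R]) (kernel x)%:E <= (2 `^ lam / lam / (1 + b))%:E)%E.
Proof.
move=> /andP[c1 c0]; have /andP[b1 b2] := hb.
have lb_gt0 : 0 < lam * (1 + b) by rewrite mulr_gt0 //; lra.
apply: le_trans (integral_kernel_le_primitive 1 c 0 _ c0 c1 _ _ _) _.
- by rewrite lt0r_neq0 //; lra.
- exact: ltr01.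
- by move=> x; rewrite in_itv /= mul1r => /andP[? _]; lra.
- by move=> x; rewrite in_itv /= => /andP[? ?]; apply: kernel_le_left; apply/andP; split; lra.
rewrite lee_fin beta_primitive0 -mulrA -invfM ler_pM2l ?powR_gt0 //.
by rewrite gerBl beta_primitive_ge0.
Qed.

Lemma integral_kernel_right d : 0 < d < 1 ->
  (\int[lebesgue_measure]_(x in `[0%R, d]) (kernel x)%:E <= (2 `^ lam / lam / (1 - b))%:E)%E.
Proof.
move=> /andP[d0 d1]; have /andP[b1 b2] := hb.
have lb_lt0 : lam * (-1 + b) < 0 by rewrite pmulr_rlt0 //; lra.
apply: le_trans (integral_kernel_le_primitive (-1) 0 d _ d0 _ d1 _ _) _.
- by rewrite ltr0_neq0 //; lra.
- exact: ltrN10.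
- by move=> x; rewrite in_itv /= mulN1r => /andP[_ ?]; lra.
- by move=> x; rewrite in_itv /= => /andP[? ?]; apply: kernel_le_right; apply/andP; split; lra.
rewrite lee_fin beta_primitive0 -mulrA -invfM ler_pM2l ?powR_gt0 //.
rewrite (_ : lam * (1 - b) = - (lam * (-1 + b))); last by ring.
by rewrite invrN gerDr beta_primitive_le0.
Qed.

Lemma integral_kernel_inner c d : -1 < c < 0 -> 0 < d < 1 ->
  (\int[lebesgue_measure]_(x in `[c, d]) (kernel x)%:E
    <= (2 `^ lam / lam * ((1 + b)^-1 + (1 - b)^-1))%:E)%E.
Proof.
move=> hc hd; have /andP[c1 c0] := hc; have /andP[d0 d1] := hd.
have mk (D : set R) : measurable_fun D (fun x => (kernel x)%:E).
  by apply/measurable_EFinP; apply: measurable_funTS; exact: measurable_kernel.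
rewrite (@itv_bndbnd_setU _ _ _ (BRight 0%R)); last 2 first.
- by rewrite bnd_simp ltW.
- by rewrite bnd_simp ltW.
rewrite ge0_integral_setU //=.
- rewrite integral_itv_obnd_cbnd // mulrDr EFinD.
  exact: leeD (integral_kernel_left _ hc) (integral_kernel_right _ hd).
- exact: mk.
- by move=> x [] /[!in_itv] /= /andP[_ ?]; rewrite lee_fin kernel_ge0 //; lra.
- rewrite disj_set2E; apply/eqP/seteqP; split => x //=.
  by rewrite !in_itv /= => -[/andP[_ ?] /andP[? _]]; lra.
Qed.

Lemma integral_kernel_le :
  (\int[lebesgue_measure]_(x in `[(-1)%R, 1%R]) (kernel x)%:E
    <= (2 `^ lam / lam * ((1 + b)^-1 + (1 - b)^-1))%:E)%E.
Proof.
apply: ge0_integral_itv_le_inner.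
- exact: ltrN10.
- exact: ltr01.
- by apply: measurable_funTS; exact: measurable_kernel.
- by move=> x; rewrite in_itv /= => /andP[_ ?]; rewrite kernel_ge0 ?ltW.
- by move=> c d; exact: integral_kernel_inner.
Qed.

End kernel.

Lemma invr_1D_1B_le (R : realFieldType) (b : R) : `|b| < 1 ->
  (1 + b)^-1 + (1 - b)^-1 <= 2 / (1 - `|b|).
Proof.
move=> b1; have nb : 0 < 1 - `|b| by rewrite subr_gt0.
have le_inv t : 1 - `|b| <= t -> t^-1 <= (1 - `|b|)^-1.
  by move=> ht; rewrite lef_pV2 ?posrE // (lt_le_trans nb ht).
have bb := ler_norm b; have Nb : - b <= `|b| by rewrite -normrN ler_norm.
rewrite (_ : 2 / _ = (1 - `|b|)^-1 + (1 - `|b|)^-1); last by ring.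
by apply: lerD; apply: le_inv; lra.
Qed.

Theorem mainTheorem8 (R : realType) (lam : R) (hlam : 0 < lam) :
  exists C : R, forall b : R, -1 < b < 1 ->
    (\int[@lebesgue_measure R]_(s in `[(-1)%R, 1%R])
        (((1 - b * s) `^ (- lam - 1)) * (1 - s) * ((1 - s ^+ 2) `^ (lam - 1)))%:E
      <= (C / (1 - `|b|))%:E)%E.
Proof.
exists (2 `^ lam / lam * 2) => b hb.
apply: le_trans (integral_kernel_le _ _ hlam hb) _.
rewrite lee_fin -[leRHS]mulrA ler_pM2l ?divr_gt0 ?powR_gt0 //.
by apply: invr_1D_1B_le; rewrite ltr_norml.
Qed.
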